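(* Let $\underline\phi\le\overline\phi$ and $\underline\psi\le\overline\psi$ be functions on $[0,1]$ satisfying (P1)–(P3). Then the pair $(C^{\mathrm M}_{\underline\phi,\underline\psi},C^{\mathrm M}_{\overline\phi,\overline\psi})$ is an imprecise copula which is coherent, i.e. with $\mathcal C=\{C: C \text{ a copula}, C^{\mathrm M}_{\underline\phi,\underline\psi}\le C\le C^{\mathrm M}_{\overline\phi,\overline\psi}\}$ one has $C^{\mathrm M}_{\underline\phi,\underline\psi}=\inf_{C\in\mathcal C}C$ and $C^{\mathrm M}_{\overline\phi,\overline\psi}=\sup_{C\in\mathcal C}C$ pointwise.
   Context: (P1) $\phi,\psi$ non-decreasing; (P2) $\phi(0)=\psi(0)=0$, $\phi(1)=\psi(1)=1$; (P3) $\phi(u)/u$, $\psi(v)/v$ non-increasing on $(0,1]$. $C^{\mathrm M}_{\phi,\psi}(u,v)=uv\min\{\phi(u)/u,\psi(v)/v\}$ for $uv>0$ and $0$ otherwise. A copula is $C:[0,1]^2\to[0,1]$ with $C(u,0)=C(0,v)=0$, $C(u,1)=u$, $C(1,v)=v$, and $C(u_2,v_2)-C(u_1,v_2)-C(u_2,v_1)+C(u_1,v_1)\ge0$ for $u_1\le u_2$, $v_1\le v_2$. An imprecise copula is a pair $(\underline C,\overline C)$ of maps $[0,1]^2\to[0,1]$ both satisfying the boundary conditions of a copula and, for all $u_1\le u_2$, $v_1\le v_2$: $\underline C(u_2,v_2)+\overline C(u_1,v_1)-\underline C(u_2,v_1)-\underline C(u_1,v_2)\ge0$; $\overline C(u_2,v_2)+\underline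 C(u_1,v_1)-\underline C(u_2,v_1)-\underline C(u_1,v_2)\ge0$; $\overline C(u_2,v_2)+\overline C(u_1,v_1)-\overline C(u_2,v_1)-\underline C(u_1,v_2)\ge0$; $\overline C(u_2,v_2)+\overline C(u_1,v_1)-\underline C(u_2,v_1)-\overline C(u_1,v_2)\ge0$. *)

(* functions on [0,1] are modelled as R -> R (resp. R -> R -> R),
   with all conditions imposed on [0,1] (resp. [0,1]^2). *)
From Stdlib Require Import Reals.
Open Scope R_scope.

Definition in01 (x : R) : Prop := 0 <= x <= 1.

Definition P1 (f : R -> R) : Prop :=
  forall x y, in01 x -> in01 y -> x <= y -> f x <= f y.
Definition P2 (f : R -> R) : Prop := f 0 = 0 /\ f 1 = 1.
Definition P3 (f : R -> R) : Prop :=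
  forall x y, 0 < x -> x <= y -> y <= 1 -> f y / y <= f x / x.

Definition admissible (f : R -> R) : Prop := P1 f /\ P2 f /\ P3 f.

Definition CM (phi psi : R -> R) (u v : R) : R :=
  if Rlt_dec 0 (u * v) then u * v * Rmin (phi u / u) (psi v / v) else 0.

Definition boundary (C : R -> R -> R) : Prop :=
  (forall u v, in01 u -> in01 v -> 0 <= C u v <= 1) /\
  (forall u, in01 u -> C u 0 = 0 /\ C 0 u = 0 /\ C u 1 = u /\ C 1 u = u).

Definition is_copula (C : R -> R -> R) : Prop :=
  boundary C /\
  forall u1 u2 v1 v2, in01 u1 -> in01 u2 -> in01 v1 -> in01 v2 ->
    u1 <= u2 -> v1 <= v2 ->
    C u2 v2 - C u1 v2 - C u2 v1 + C u1 v1 >= 0.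

Definition is_imprecise_copula (Cl Cu : R -> R -> R) : Prop :=
  boundary Cl /\ boundary Cu /\
  forall u1 u2 v1 v2, in01 u1 -> in01 u2 -> in01 v1 -> in01 v2 ->
    u1 <= u2 -> v1 <= v2 ->
    Cl u2 v2 + Cu u1 v1 - Cl u2 v1 - Cl u1 v2 >= 0 /\
    Cu u2 v2 + Cl u1 v1 - Cl u2 v1 - Cl u1 v2 >= 0 /\
    Cu u2 v2 + Cu u1 v1 - Cu u2 v1 - Cl u1 v2 >= 0 /\
    Cu u2 v2 + Cu u1 v1 - Cl u2 v1 - Cu u1 v2 >= 0.

Definition is_inf (S : R -> Prop) (x : R) : Prop :=
  (forall y, S y -> x <= y) /\ (forall b, (forall y, S y -> b <= y) -> b <= x).
Definition is_sup (S : R -> Prop) (x : R) : Prop :=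
  (forall y, S y -> y <= x) /\ (forall b, (forall y, S y -> y <= b) -> x <= b).

Definition between (Cl Cu C : R -> R -> R) : Prop :=
  is_copula C /\
  forall u v, in01 u -> in01 v -> Cl u v <= C u v /\ C u v <= Cu u v.

Definition coherent (Cl Cu : R -> R -> R) : Prop :=
  forall u v, in01 u -> in01 v ->
    is_inf (fun y => exists C, between Cl Cu C /\ y = C u v) (Cl u v) /\
    is_sup (fun y => exists C, between Cl Cu C /\ y = C u v) (Cu u v).

(** Both bounds are themselves copulas: on the unit square [C^M_{phi,psi}(u,v) = min(v phi(u), u psi(v))],
    and the 2-increasing property of this minimum follows from the monotonicity of [phi], [psi] together
    with the cross inequalities [x phi(y) <= y phi(x)] for [x <= y] given by (P3). Moreover
    [C^M_{phi,psi}] is monotone in [(phi, psi)]. Two ordered copulas form an imprecise copula, and they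
    are coherent since each bound belongs to the set of copulas lying between them, so the infimum and
    supremum are attained. *)

From Stdlib Require Import Reals Lra Psatz.
From Stdlib Require Rminmax.
Open Scope R_scope.

Lemma Rmult_Rmin_distr_l (r a b : R) : 0 <= r -> r * Rmin a b = Rmin (r * a) (r * b).
Proof.
intros Hr. symmetry. apply (Rminmax.R.min_monotone (Rmult r)).
intros x y Hxy. now apply Rmult_le_compat_l.
Qed.

Lemma P1_P2_range (f : R -> R) (u : R) : P1 f -> P2 f -> in01 u -> 0 <= f u <= 1.
Proof.
intros Hmono [H0 H1] Hu.
split; [rewrite <- H0 | rewrite <- H1]; apply Hmono; unfold in01 in *; lra.
Qed.

Lemma P3_cross (f : R -> R) (x y : R) :
  P3 f -> f 0 = 0 -> 0 <= x -> x <= y -> y <= 1 -> x * f y <= y * f x.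
Proof.
intros H3 H0 Hx Hxy Hy.
destruct (Req_dec x 0) as [->|Hx0].
- rewrite H0. lra.
- assert (Hslope := H3 x y ltac:(lra) Hxy Hy).
  replace (x * f y) with (x * y * (f y / y)) by (field; lra).
  replace (y * f x) with (x * y * (f x / x)) by (field; lra).
  apply Rmult_le_compat_l; nra.
Qed.

Lemma P2_P3_ge_id (f : R -> R) (u : R) : P2 f -> P3 f -> in01 u -> u <= f u.
Proof.
intros [H0 H1] H3 Hu.
assert (Hcross := P3_cross f u 1 H3 H0 ltac:(apply Hu) ltac:(apply Hu) ltac:(lra)).
rewrite H1 in Hcross. lra.
Qed.

Lemma CM_min_form (phi psi : R -> R) (u v : R) :
  phi 0 = 0 -> psi 0 = 0 -> in01 u -> in01 v ->
  CM phi psi u v = Rmin (v * phi u) (u * psi v).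
Proof.
intros Hphi0 Hpsi0 Hu Hv. unfold CM, in01 in *.
destruct (Rlt_dec 0 (u * v)) as [Huv|Huv].
- assert (0 < u) by nra. assert (0 < v) by nra.
  rewrite Rmult_Rmin_distr_l by lra.
  f_equal; field; lra.
- assert (u = 0 \/ v = 0) as [->| ->] by nra.
  + rewrite Hphi0, !Rmult_0_l, !Rmult_0_r, Rmin_left; lra.
  + rewrite Hpsi0, !Rmult_0_l, !Rmult_0_r, Rmin_left; lra.
Qed.

(** The rectangle inequality for [(u,v) |-> min(v F(u), u G(v))], with [Fi = F(ui)] and [Gj = G(vj)].
    The two cases where the minima at [(u1,v1)] and [(u2,v2)] are attained on different sides
    are mirror images of each other; this is one of them. *)
Lemma min_form_rectangle_mixed (u1 u2 v1 v2 F1 F2 G1 G2 : R) :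
  0 <= u1 -> 0 <= v1 -> v1 <= v2 -> 0 <= F1 -> F1 <= F2 -> 0 <= G1 -> G1 <= G2 ->
  v1 * G2 <= v2 * G1 -> u1 * G1 <= v1 * F1 ->
  0 <= v2 * F2 - Rmin (v2 * F1) (u1 * G2) - Rmin (v1 * F2) (u2 * G1) + u1 * G1.
Proof.
intros.
assert (Rmin (v1 * F2) (u2 * G1) <= v1 * F2) by apply Rmin_l.
destruct (Req_dec v1 0) as [->|Hv1].
- assert (Rmin (v2 * F1) (u1 * G2) <= v2 * F1) by apply Rmin_l. nra.
- assert (Rmin (v2 * F1) (u1 * G2) <= u1 * G2) by apply Rmin_r.
  (* after multiplying by [v1 > 0] the claim is a sum of three nonnegative products *)
  assert (0 <= (v2 - v1) * (v1 * F1 - u1 * G1)) by (apply Rmult_le_pos; lra).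
  assert (0 <= (v2 - v1) * (F2 - F1) * v1) by (apply Rmult_le_pos; nra).
  assert (0 <= u1 * (v2 * G1 - v1 * G2)) by nra.
  apply (Rmult_le_reg_l v1); [lra|]. nra.
Qed.

Lemma min_form_rectangle (u1 u2 v1 v2 F1 F2 G1 G2 : R) :
  0 <= u1 -> u1 <= u2 -> 0 <= v1 -> v1 <= v2 ->
  0 <= F1 -> F1 <= F2 -> 0 <= G1 -> G1 <= G2 ->
  u1 * F2 <= u2 * F1 -> v1 * G2 <= v2 * G1 ->
  Rmin (v2 * F2) (u2 * G2) - Rmin (v2 * F1) (u1 * G2) - Rmin (v1 * F2) (u2 * G1)
    + Rmin (v1 * F1) (u1 * G1) >= 0.
Proof.
intros.
assert (0 <= (v2 - v1) * (F2 - F1)) by (apply Rmult_le_pos; lra).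
assert (0 <= (u2 - u1) * (G2 - G1)) by (apply Rmult_le_pos; lra).
assert (Rmin (v2 * F1) (u1 * G2) <= v2 * F1) by apply Rmin_l.
assert (Rmin (v2 * F1) (u1 * G2) <= u1 * G2) by apply Rmin_r.
assert (Rmin (v1 * F2) (u2 * G1) <= v1 * F2) by apply Rmin_l.
assert (Rmin (v1 * F2) (u2 * G1) <= u2 * G1) by apply Rmin_r.
destruct (Rle_dec (v2 * F2) (u2 * G2));
  [rewrite (Rmin_left (v2 * F2)) by lra | rewrite (Rmin_right (v2 * F2)) by lra];
  (destruct (Rle_dec (v1 * F1) (u1 * G1));
  [rewrite (Rmin_left (v1 * F1)) by lra | rewrite (Rmin_right (v1 * F1)) by lra]).
- lra.
- assert (Hmixed := min_form_rectangle_mixed u1 u2 v1 v2 F1 F2 G1 G2). lra.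
- assert (Hmixed := min_form_rectangle_mixed v1 v2 u1 u2 G1 G2 F1 F2).
  rewrite (Rmin_comm (u1 * G2)), (Rmin_comm (u2 * G1)) in Hmixed. lra.
- lra.
Qed.

Section MinCopula.

Variables phi psi : R -> R.
Hypotheses (Hphi : admissible phi) (Hpsi : admissible psi).

Lemma CM_boundary : boundary (CM phi psi).
Proof.
destruct Hphi as [Mphi [[Hphi0 Hphi1] Sphi]], Hpsi as [Mpsi [[Hpsi0 Hpsi1] Spsi]].
split.
- intros u v Hu Hv. rewrite CM_min_form by assumption.
  destruct (P1_P2_range phi u Mphi (conj Hphi0 Hphi1) Hu).
  destruct (P1_P2_range psi v Mpsi (conj Hpsi0 Hpsi1) Hv).
  assert (Rmin (v * phi u) (u * psi v) <= v * phi u) by apply Rmin_l.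
  unfold in01 in *. split; [apply Rmin_glb|]; nra.
- intros u Hu.
  assert (u <= phi u) by exact (P2_P3_ge_id phi u (conj Hphi0 Hphi1) Sphi Hu).
  assert (u <= psi u) by exact (P2_P3_ge_id psi u (conj Hpsi0 Hpsi1) Spsi Hu).
  assert (I0 : in01 0) by (unfold in01; lra). assert (I1 : in01 1) by (unfold in01; lra).
  rewrite !CM_min_form by assumption.
  rewrite Hphi0, Hpsi0, Hphi1, Hpsi1, !Rmult_0_l, !Rmult_0_r, !Rmult_1_l, !Rmult_1_r.
  unfold in01 in Hu.
  unfold Rmin. repeat split; destruct Rle_dec; lra.
Qed.

Lemma CM_is_copula : is_copula (CM phi psi).
Proof.
split; [exact CM_boundary|].
destruct Hphi as [Mphi [[Hphi0 Hphi1] Sphi]], Hpsi as [Mpsi [[Hpsi0 Hpsi1] Spsi]].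
intros u1 u2 v1 v2 Hu1 Hu2 Hv1 Hv2 Hu Hv.
rewrite !CM_min_form by assumption.
assert (0 <= phi u1) by apply (P1_P2_range phi u1 Mphi (conj Hphi0 Hphi1) Hu1).
assert (0 <= psi v1) by apply (P1_P2_range psi v1 Mpsi (conj Hpsi0 Hpsi1) Hv1).
assert (phi u1 <= phi u2) by now apply Mphi.
assert (psi v1 <= psi v2) by now apply Mpsi.
unfold in01 in *.
assert (u1 * phi u2 <= u2 * phi u1) by (apply P3_cross; try assumption; lra).
assert (v1 * psi v2 <= v2 * psi v1) by (apply P3_cross; try assumption; lra).
apply min_form_rectangle; lra.
Qed.

End MinCopula.

Lemma CM_le (phil phiu psil psiu : R -> R) (u v : R) :
  phil 0 = 0 -> phiu 0 = 0 -> psil 0 = 0 -> psiu 0 = 0 ->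
  (forall x, in01 x -> phil x <= phiu x) -> (forall x, in01 x -> psil x <= psiu x) ->
  in01 u -> in01 v -> CM phil psil u v <= CM phiu psiu u v.
Proof.
intros Hl0 Hu0 Kl0 Ku0 Hphi Hpsi Hu Hv.
rewrite !CM_min_form by assumption.
assert (phil u <= phiu u) by auto. assert (psil v <= psiu v) by auto.
unfold in01 in *.
apply Rmin_glb; [eapply Rle_trans; [apply Rmin_l|] | eapply Rle_trans; [apply Rmin_r|]]; nra.
Qed.

Lemma ordered_copulas_imprecise (Cl Cu : R -> R -> R) :
  is_copula Cl -> is_copula Cu -> (forall u v, in01 u -> in01 v -> Cl u v <= Cu u v) ->
  is_imprecise_copula Cl Cu.
Proof.
intros [Bl Rl] [Bu Ru] LE.
split; [exact Bl|]; split; [exact Bu|].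
intros u1 u2 v1 v2 Hu1 Hu2 Hv1 Hv2 Hu Hv.
assert (Rl' := Rl u1 u2 v1 v2 Hu1 Hu2 Hv1 Hv2 Hu Hv).
assert (Ru' := Ru u1 u2 v1 v2 Hu1 Hu2 Hv1 Hv2 Hu Hv).
assert (LE11 := LE u1 v1 Hu1 Hv1). assert (LE12 := LE u1 v2 Hu1 Hv2).
assert (LE21 := LE u2 v1 Hu2 Hv1). assert (LE22 := LE u2 v2 Hu2 Hv2).
repeat split; lra.
Qed.

Lemma is_inf_attained (S : R -> Prop) (x : R) : S x -> (forall y, S y -> x <= y) -> is_inf S x.
Proof. intros Sx Hlow. split; [exact Hlow|]. intros b Hb. now apply Hb. Qed.

Lemma is_sup_attained (S : R -> Prop) (x : R) : S x -> (forall y, S y -> y <= x) -> is_sup S x.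
Proof. intros Sx Hup. split; [exact Hup|]. intros b Hb. now apply Hb. Qed.

Lemma ordered_copulas_coherent (Cl Cu : R -> R -> R) :
  is_copula Cl -> is_copula Cu -> (forall u v, in01 u -> in01 v -> Cl u v <= Cu u v) ->
  coherent Cl Cu.
Proof.
intros HCl HCu LE u v Hu Hv.
assert (Hl : between Cl Cu Cl) by (split; [exact HCl|]; intros x y Hx Hy; split; auto with real).
assert (Hr : between Cl Cu Cu) by (split; [exact HCu|]; intros x y Hx Hy; split; auto with real).
split.
- apply is_inf_attained; [now exists Cl|].
  intros y [C [[_ HC] ->]]. now apply HC.
- apply is_sup_attained; [now exists Cu|].
  intros y [C [[_ HC] ->]]. now apply HC.
Qed.

Theorem corollary2 (phil phiu psil psiu : R -> R) :
  admissible phil -> admissible phiu -> admissible psil -> admissible psiu ->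
  (forall x, in01 x -> phil x <= phiu x) ->
  (forall x, in01 x -> psil x <= psiu x) ->
  is_imprecise_copula (CM phil psil) (CM phiu psiu) /\
  coherent (CM phil psil) (CM phiu psiu).
Proof.
intros Hl Hu Kl Ku Hphi Hpsi.
assert (LE : forall u v, in01 u -> in01 v -> CM phil psil u v <= CM phiu psiu u v).
{ intros u v. apply CM_le; try assumption;
    [apply Hl | apply Hu | apply Kl | apply Ku]. }
split.
- apply ordered_copulas_imprecise; [apply CM_is_copula..|]; assumption.
- apply ordered_copulas_coherent; [apply CM_is_copula..|]; assumption.
Qed.
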